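(* Let $n>1$ and let $a_0,\dots,a_{n-1},c_0,\dots,c_{n-1}\in\mathbb Z/(n)$ with $a_i=a_{-i}$ and $c_i=c_{-i}$ for all $i\in\mathbb Z/(n)$. If there exists an invertible $a\in\mathbb Z/(n)$ such that $a\,a_i=c_{ai}$ for all $i\in\mathbb Z/(n)$, then the solutions $(X,r_{a_0,\dots,a_{n-1}})$ and $(X,r_{c_0,\dots,c_{n-1}})$ are isomorphic. Conversely, if the bilinear forms $b_{a_0,\dots,a_{n-1}}$ and $b_{c_0,\dots,c_{n-1}}$ are both non-singular and these two solutions are isomorphic, then there exists an invertible $a\in\mathbb Z/(n)$ with $a\,a_i=c_{ai}$ for all $i$.
   Context: Let $n>1$, $X=\{x_{ij}: i,j\in\mathbb Z/(n)\}$ (a set of $n^2$ elements indexed by $(\mathbb Z/(n))^2$). For $j_0,\dots,j_{n-1}\in\mathbb Z/(n)$ with $j_i=j_{-i}$, let $r_{j_0,\dots,j_{n-1}}(x,y)=(\lambda_x(y),\lambda^{-1}_{\lambda_x(y)}(x))$, where $\lambda_{x_{ij}}(x_{kl})=x_{k+j,\ l-j_{k+j-i}}$; this is a solution of the YBE (it is the restriction to $x_{ij}=(e_i,j)$ of the solution associated to the left brace $(\mathbb Z/(n))^n\times\mathbb Z/(n)$ with $(u,i)\circ(v,j)=(u+\alpha(i)(v),i+j)$, $(u,i)+(v,j)=(u+v,i+j+b(u,v))$, $\alpha(i)(e_k)=e_{i+k}$). Here $b_{j_0,\dots,j_{n-1}}$ is the bilinear form on $(\mathbb Z/(n))^n$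 with $b(e_k,e_l)=j_{l-k}$ for the standard basis $(e_k)_{k\in\mathbb Z/(n)}$; it is non-singular if $b(u,v)=0$ for all $v$ implies $u=0$. An isomorphism of solutions $f:(X,r)\to(X,s)$ (with $r(x,y)=(\sigma_x(y),\cdot)$, $s(x,y)=(\sigma'_x(y),\cdot)$) is a bijection with $f(\sigma_x(y))=\sigma'_{f(x)}(f(y))$ for all $x,y$. *)

From mathcomp Require Import all_boot all_order all_algebra.
Set Implicit Arguments. Unset Strict Implicit. Unset Printing Implicit Defensive.
Import GRing.Theory.
Local Open Scope ring_scope.

(* The set X = {x_ij : i,j in Z/(n)}, with x_ij represented by the pair (i,j).
   Parameters j_0,...,j_{n-1} are encoded as a function J : 'Z_n -> 'Z_n. *)
Definition XZ (n : nat) := ('Z_n * 'Z_n)%type.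

Definition lam (n : nat) (J : 'Z_n -> 'Z_n) (x y : XZ n) : XZ n :=
  (y.1 + x.2, y.2 - J (y.1 + x.2 - x.1)).

Definition sym_param (n : nat) (J : 'Z_n -> 'Z_n) : Prop :=
  forall i : 'Z_n, J i = J (- i).

Definition sol_iso (n : nat) (J K : 'Z_n -> 'Z_n) (f : XZ n -> XZ n) : Prop :=
  bijective f /\ forall x y : XZ n, f (lam J x y) = lam K (f x) (f y).

Definition sols_isomorphic (n : nat) (J K : 'Z_n -> 'Z_n) : Prop :=
  exists f : XZ n -> XZ n, sol_iso J K f.

Definition bform (n : nat) (J : 'Z_n -> 'Z_n) (u v : 'Z_n -> 'Z_n) : 'Z_n :=
  \sum_(k : 'Z_n) \sum_(l : 'Z_n) u k * v l * J (l - k).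

Definition nonsingular (n : nat) (J : 'Z_n -> 'Z_n) : Prop :=
  forall u : 'Z_n -> 'Z_n, (forall v : 'Z_n -> 'Z_n, bform J u v = 0) ->
    forall k, u k = 0.

From mathcomp Require Import all_boot all_order all_algebra.
From mathcomp Require Import ring.
Import GRing.Theory.
Local Open Scope ring_scope.
Set Implicit Arguments. Unset Strict Implicit.

(* Direct part: if a is a unit with a A(i) = C(a i), then x_ij |-> x_{ai,aj}
   is an isomorphism r_A -> r_C.

   Write (J * u)(l) = \sum_k u_k J(l - k); then
   b_J(u, v) = \sum_l v_l (J * u)(l), so b_J is non-singular exactly when
   convolution with J is injective (hence bijective, Z/(n)^n being finite).
   Two consequences drive everything:
   - the values J(m) generate Z/(n) additively;
   - if lambda_x and lambda_y commute then J * (d_p + d_q) = J * (d_r + d_s) for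
     explicit p, q, r, s, where d_p is the indicator of p; for n > 2 the
     multiset {p, q} is then determined, and one finds that two distinct
     commuting lambda's come from the subgroup K = {x_i0}.  For n = 2 the same
     role is played by the fact that lambda_x is an involution only on K.
   As an isomorphism preserves commutation and involutions, it maps K into K.
   Since the values A(m) generate Z/(n), this forces f to be affine,
   f(x_kl) = x_{b + a k, a l}, with a a unit, and comparing f(lambda_{x_00} x_m0)
   with lambda_{f x_00}(f x_m0) gives a A(m) = C(a m). *)

Section Convolution.
Variable n : nat.
Implicit Types (J u v w : 'Z_n -> 'Z_n) (p q r s : 'Z_n).

Definition conv J u (l : 'Z_n) : 'Z_n := \sum_k u k * J (l - k).

Lemma bformE J u v : bform J u v = \sum_l v l * conv J u l.
Proof.
rewrite /bform exchange_big /=; apply: eq_bigr => l _.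
by rewrite /conv mulr_sumr; apply: eq_bigr => k _; ring.
Qed.

Lemma convB J u v l : conv J (fun k => u k - v k) l = conv J u l - conv J v l.
Proof. by rewrite /conv -sumrB; apply: eq_bigr => k _; rewrite mulrBl. Qed.

Lemma conv_inj J u v : nonsingular J ->
  (forall l, conv J u l = conv J v l) -> forall k, u k = v k.
Proof.
move=> nsJ euv k; apply/eqP; rewrite -subr_eq0; apply/eqP; move: k.
apply: nsJ => w; rewrite bformE; apply: big1 => l _.
by rewrite convB euv subrr mulr0.
Qed.

(* Being injective on the finite set Z/(n)^n, it is also surjective. *)
Lemma conv_surj J w : nonsingular J -> exists u, forall l, conv J u l = w l.
Proof.
move=> nsJ.
pose Phi (u : {ffun 'Z_n -> 'Z_n}) : {ffun 'Z_n -> 'Z_n} := [ffun l => conv J u l].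
have Phi_inj : injective Phi.
  move=> u v /ffunP euv; apply/ffunP => k; apply: conv_inj nsJ _ k => l.
  by have := euv l; rewrite !ffunE.
have [Psi _ PsiK] := injF_bij Phi_inj.
exists (Psi [ffun l => w l]) => l.
have := congr1 (fun h : {ffun 'Z_n -> 'Z_n} => h l) (PsiK [ffun l => w l]).
by rewrite !ffunE.
Qed.

(* The values of a non-singular J generate Z/(n) as an additive group:
   1 = (J * u)(0) for some u, and every element is a multiple of 1. *)
Lemma nonsingular_generates J (S : 'Z_n -> Prop) : nonsingular J ->
  S 0 -> (forall s t, S s -> S t -> S (s + t)) -> (forall m, S (J m)) ->
  forall s, S s.
Proof.
move=> nsJ S0 SD SJ.
have SMn s c : S s -> S (s *+ c).
  by move=> Ss; elim: c => [|c IH]; rewrite ?mulr0n // mulrS; apply: SD.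
have [u hu] := conv_surj (fun _ => 1) nsJ.
have S1 : S 1.
  rewrite -(hu 0); apply: big_ind => // k _.
  by rewrite -[u k]natr_Zp mulr_natl; apply: SMn.
by move=> s; rewrite -[s]natr_Zp; apply: SMn.
Qed.

Lemma additive_Zp_scale (g : 'Z_n -> 'Z_n) :
  (forall x y, g (x + y) = g x + g y) -> forall x, g x = g 1 * x.
Proof.
move=> gD.
have g0 : g 0 = 0 by apply: (@addrI _ (g 0)); rewrite -gD !addr0.
have gMn c : g (1 *+ c) = g 1 *+ c.
  by elim: c => [|c IH]; rewrite ?mulr0n // !mulrS gD IH.
by move=> x; rewrite -[x]natr_Zp gMn mulr_natr.
Qed.

Definition delta p (k : 'Z_n) : 'Z_n := (k == p)%:R.
Definition delta2 p q (k : 'Z_n) : 'Z_n := delta p k + delta q k.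

Lemma conv_delta2 J p q l : conv J (delta2 p q) l = J (l - p) + J (l - q).
Proof.
have conv_delta r : \sum_k delta r k * J (l - k) = J (l - r).
  rewrite (bigD1 r) //= /delta eqxx mul1r big1 ?addr0 // => k /negbTE ->.
  by rewrite mul0r.
rewrite /conv -!conv_delta -big_split /=.
by apply: eq_bigr => k _; rewrite mulrDl.
Qed.

(* For n > 2 the elements 0, 1, 2 of Z/(n) are distinct, so d_p + d_q
   determines the multiset {p, q}. *)
Lemma delta2_inj p q r s : (2 < n)%N ->
  (forall k, delta2 p q k = delta2 r s k) -> (p = r /\ q = s) \/ (p = s /\ q = r).
Proof.
move=> n_gt2 e.
have cnt k : ((k == p) + (k == q) = (k == r) + (k == s))%N.
  have small (b c : bool) : (b + c < n)%N.
    by apply: leq_ltn_trans n_gt2; rewrite -addn1 leq_add ?leq_b1.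
  have := congr1 (@nat_of_ord _) (e k); rewrite /delta2 /delta -!natrD.
  by rewrite !val_Zp_nat ?(ltnW n_gt2) // !modn_small.
have := cnt p; have := cnt q; rewrite !eqxx => cq cp.
case: (eqVneq p r) => [epr|npr].
  subst r; left; split=> //; apply/eqP.
  by move: cq; case: (q == s); case: (q == p).
have eps : p = s.
  by apply/eqP; move: cp; rewrite (negbTE npr); case: (p == s); case: (p == q).
subst s; right; split=> //; apply/eqP.
by move: cq; case: (q == r); case: (q == p).
Qed.

End Convolution.

Section Lambdas.
Variable n : nat.
Implicit Types (J : 'Z_n -> 'Z_n) (x y : XZ n).

Definition lam_commute J (x y : XZ n) : Prop :=
  forall z, lam J x (lam J y z) = lam J y (lam J x z).

(* The lambda's of the subgroup K = {x_i0} are translations, so they commute. *)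
Lemma lam_commute_K J x y : x.2 = 0 -> y.2 = 0 -> lam_commute J x y.
Proof.
case: x => i j; case: y => i' j' /= -> -> [k l]; rewrite /lam /= !addr0.
by congr pair; ring.
Qed.

(* Commutation of lambda_{x_ij} and lambda_{x_i'j'}, read on second coordinates. *)
Lemma lam_commute_conv J i j i' j' : lam_commute J (i, j) (i', j') ->
  forall l, conv J (delta2 (i' - j') (i - j - j')) l =
            conv J (delta2 (i - j) (i' - j - j')) l.
Proof.
move=> hc l; have := congr1 snd (hc (l, 0)); rewrite /lam /= !conv_delta2.
have -> : l + j' + j - i = l - (i - j - j') by ring.
have -> : l + j + j' - i' = l - (i' - j - j') by ring.
have -> : l + j' - i' = l - (i' - j') by ring.
have -> : l + j - i = l - (i - j) by ring.
by rewrite !sub0r -!opprD => /oppr_inj.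
Qed.

Lemma lam_commute_nonsingular J x y : (2 < n)%N -> nonsingular J ->
  lam_commute J x y -> x = y \/ (x.2 = 0 /\ y.2 = 0).
Proof.
case: x => i j; case: y => i' j' n_gt2 nsJ /lam_commute_conv e.
case: (delta2_inj n_gt2 (conv_inj nsJ e)) => -[e1 e2]; [left | right] => /=.
- have ei : i = i' by move/(congr1 (fun t => t + j' + j)): e2; rewrite !subrK.
  subst i'; congr pair.
  have -> : j = i - (i - j) by ring.
  by rewrite -e1; ring.
- split.
    have -> : j = (i' - j') - (i' - j - j') by ring.
    by rewrite e1 subrr.
  have -> : j' = (i - j) - (i - j - j') by ring.
  by rewrite e2 subrr.
Qed.

Lemma lam_K_involutive J x : (2%:R : 'Z_n) = 0 -> x.2 = 0 -> involutive (lam J x).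
Proof.
case: x => i j /= two0 -> [k l]; rewrite /lam /= !addr0 -addrA -opprD.
by rewrite -mulr2n -mulr_natl two0 mul0r subr0.
Qed.

Lemma involutive_lam_nonsingular J x : nonsingular J ->
  involutive (lam J x) -> x.2 = 0.
Proof.
case: x => i j nsJ inv /=; case: (eqVneq j 0) => // nz_j; exfalso.
have jj : j + j = 0 by have := congr1 fst (inv (0, 0)); rewrite /= add0r.
have e l : conv J (delta2 (i - j) i) l = conv J (fun _ => 0) l.
  have := congr1 snd (inv (l, 0)); rewrite /= -(addrA l j j) jj addr0 sub0r.
  rewrite -opprD => /eqP; rewrite oppr_eq0 => /eqP sum0.
  rewrite conv_delta2 /conv big1 => [|k _]; last by rewrite mul0r.
  by apply: eq_trans sum0; congr (J _ + _); ring.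
have := conv_inj nsJ e i; rewrite /delta2 /delta eqxx.
have -> : (i == i - j) = false.
  apply/negbTE; apply: contra_neq nz_j => h.
  have -> : j = i - (i - j) by ring.
  by rewrite -h subrr.
by rewrite add0r => /eqP; rewrite oner_eq0.
Qed.

End Lambdas.

Section Isomorphisms.
Variables (n : nat) (A C : 'Z_n -> 'Z_n) (f : XZ n -> XZ n).
Hypothesis isof : sol_iso A C f.

Lemma sol_iso_commute x y : lam_commute A x y -> lam_commute C (f x) (f y).
Proof. by case: isof => [[g _ gf] hom] h v; rewrite -(gf v) -!hom h. Qed.

Lemma sol_iso_involutive x : involutive (lam A x) -> involutive (lam C (f x)).
Proof. by case: isof => [[g _ gf] hom] h v; rewrite -(gf v) -!hom h. Qed.

Hypotheses (n_gt1 : (1 < n)%N) (nsA : nonsingular A) (nsC : nonsingular C).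

(* f maps the subgroup K = {x_i0} into itself: for n > 2, f x_i0 and
   f x_{i+1,0} are distinct with commuting lambda's; for n = 2, the lambda of
   f x_i0 is an involution. *)
Lemma iso_preserves_K i : (f (i, 0)).2 = 0.
Proof.
case: (ltngtP n 2) => [|n_gt2|n2]; first by rewrite ltnS leqNgt n_gt1.
- have c := sol_iso_commute (@lam_commute_K _ A (i, 0) (i + 1, 0) erefl erefl).
  case: (lam_commute_nonsingular n_gt2 nsC c) => [|[] //].
  case: isof => /bij_inj f_inj _ /f_inj /(congr1 fst) /= /eqP.
  by rewrite -subr_eq0 opprD addrA subrr sub0r oppr_eq0 oner_eq0.
- apply: involutive_lam_nonsingular nsC _; apply: sol_iso_involutive.
  apply: lam_K_involutive => //; apply: ord_inj.
  by rewrite val_Zp_nat // [X in (_ %% X)%N]n2.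
Qed.

(* The first coordinate of f(x_kl) does not depend on l: the shifts s with
   (f x_{k,l-s}).1 = (f x_kl).1 form a subgroup containing all A(m). *)
Lemma iso_first_coord k l : (f (k, l)).1 = (f (k, 0)).1.
Proof.
pose P s := forall k l, (f (k, l - s)).1 = (f (k, l)).1.
have PA m : P (A m).
  move=> k' l'; case: isof => _ hom.
  have := congr1 fst (hom (k' - m, 0) (k', l')).
  rewrite /lam /= iso_preserves_K !addr0.
  by have -> : k' - (k' - m) = m by ring.
have P0 : P 0 by move=> k' l'; rewrite subr0.
have PD s t : P s -> P t -> P (s + t).
  move=> Ps Pt k' l'; have -> : l' - (s + t) = l' - t - s by ring.
  by rewrite Ps Pt.
by have := nonsingular_generates nsA P0 PD PA l k l; rewrite subrr.
Qed.


Lemma iso_affine : exists a b, forall k l, f (k, l) = (b + a * k, a * l).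
Proof.
pose al k := (f (k, 0)).1; pose ga j := al j - al 0.
have alD i j k : al (k + j) = al k + (f (i, j)).2.
  case: isof => _ hom; have := congr1 fst (hom (i, j) (k, 0)).
  by rewrite /lam /= iso_first_coord.
have snd_ga i j : (f (i, j)).2 = ga j.
  by have := alD i j 0; rewrite add0r /ga => ->; rewrite addrC addKr.
have gaD k j : ga (k + j) = ga k + ga j by rewrite /ga (alD 0 j k) snd_ga addrAC.
exists (ga 1), (al 0) => k l.
rewrite -!(additive_Zp_scale gaD) /ga (addrC (al 0)) subrK.
by rewrite [f _]surjective_pairing iso_first_coord snd_ga.
Qed.

(* The multiplier a of f is a unit (f is onto) and satisfies a A(i) = C(a i),
   read off from f (lambda_{x_00} x_i0) = lambda_{f x_00} (f x_i0). *)
Lemma iso_scaling :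
  exists2 a : 'Z_n, a \is a GRing.unit & forall i, a * A i = C (a * i).
Proof.
have [a [b fE]] := iso_affine.
case: isof => [[g _ gf] hom]; exists a.
  apply/unitrPr; have := gf (0, 1); case: (g (0, 1)) => k l.
  by rewrite fE => /(congr1 snd) /= al1; exists l.
move=> i; have := congr1 snd (hom (0, 0) (i, 0)).
rewrite /lam /= !fE /= !(addr0, subr0, mulr0, sub0r) addrAC subrr add0r.
by rewrite mulrN => /oppr_inj.
Qed.

End Isomorphisms.

Lemma scaling_iso n (A C : 'Z_n -> 'Z_n) a : a \is a GRing.unit ->
  (forall i, a * A i = C (a * i)) -> sol_iso A C (fun x => (a * x.1, a * x.2)).
Proof.
move=> ua aAC; split.
  exists (fun x : XZ n => (a^-1 * x.1, a^-1 * x.2)).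
    by case=> k l /=; rewrite !mulKr.
  by case=> k l /=; rewrite !mulVKr.
case=> i j [k l]; rewrite /lam /=.
have -> : a * k + a * j - a * i = a * (k + j - i) by ring.
by rewrite -aAC mulrDr mulrBr.
Qed.

Unset Implicit Arguments.

Theorem mainTheorem15 (n : nat) (A C : 'Z_n -> 'Z_n) :
  (1 < n)%N -> sym_param A -> sym_param C ->
  ((exists2 a : 'Z_n, a \is a GRing.unit & forall i : 'Z_n, a * A i = C (a * i)) ->
     sols_isomorphic A C)
  /\
  (nonsingular A -> nonsingular C -> sols_isomorphic A C ->
     exists2 a : 'Z_n, a \is a GRing.unit & forall i : 'Z_n, a * A i = C (a * i)).
Proof.
move=> n_gt1 _ _; split.
- by case=> a ua aAC; exists (fun x => (a * x.1, a * x.2)); exact: scaling_iso.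
- by move=> nsA nsC [f isof]; exact: iso_scaling isof n_gt1 nsA nsC.
Qed.
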